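(* Let $a$ be a positive integer. The number of distinct $c$-triangles in $\Gamma$ having $a$ as a vertex equals the number of allowable pairs $(m,n)$ satisfying $m^3+2m^2n+mn^2+n^3=a$.
   Context: An allowable pair is $(m,n)\in\mathbb{Z}^2$ with $\gcd(m,n)=1$ and $mn(m+n)\neq0$. Let $t_1(m,n)=m^3+2m^2n+mn^2+n^3$, $t_2(m,n)=m^3-mn^2-n^3$, $t_3(m,n)=m^3+2m^2n+3mn^2+n^3$. For an allowable pair, $c=-A(m,n)/B(m,n)$ with $A(m,n)=m^6+2m^5n+4m^4n^2+8m^3n^3+9m^2n^4+4mn^5+n^6$, $B(m,n)=4m^2n^2(m+n)^2$; these are exactly the rational $c$ for which $f_c(x)=x^2+c$ has a rational $3$-cycle, and the cycle is $\{\frac{t_1}{2mn(m+n)},\frac{t_2}{2mn(m+n)},-\frac{t_3}{2mn(m+n)}\}$ in lowest terms. The graph $\Gamma$ has vertex set the positive integers, with an edge between $a\neq b$ iff there is an allowable pair $(m,n)$ and $i\neq j$ in $\{1,2,3\}$ with $a=|t_i(m,n)|$, $b=|t_j(m,n)|$. For such $c$, the $c$-triangle is the triangle of $\Gamma$ with vertices $|t_1(m,n)|,|t_2(m,n)|,|t_3(m,n)|$ (the absolute values of the numerators of the $3$-cycle of $f_c$); distinct $c$-triangles means $c$-triangles for distinct values of $c$. *)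

From HB Require Import structures.
From mathcomp Require Import all_boot all_order all_algebra.
Set Implicit Arguments. Unset Strict Implicit. Unset Printing Implicit Defensive.
Import Order.TTheory GRing.Theory Num.Theory.
Local Open Scope ring_scope.

Definition t1 (m n : int) : int := m ^+ 3 + 2 * m ^+ 2 * n + m * n ^+ 2 + n ^+ 3.
Definition t2 (m n : int) : int := m ^+ 3 - m * n ^+ 2 - n ^+ 3.
Definition t3 (m n : int) : int := m ^+ 3 + 2 * m ^+ 2 * n + 3 * m * n ^+ 2 + n ^+ 3.

Definition Apoly (m n : int) : int :=
  m ^+ 6 + 2 * m ^+ 5 * n + 4 * m ^+ 4 * n ^+ 2 + 8 * m ^+ 3 * n ^+ 3
  + 9 * m ^+ 2 * n ^+ 4 + 4 * m * n ^+ 5 + n ^+ 6.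
Definition Bpoly (m n : int) : int := 4 * m ^+ 2 * n ^+ 2 * (m + n) ^+ 2.

Definition allowable (m n : int) : Prop :=
  gcdz m n = 1%N /\ m * n * (m + n) != 0.

Definition cval (m n : int) : rat := - ((Apoly m n)%:~R / (Bpoly m n)%:~R).

Definition c_triangle_has_vertex (c : rat) (a : nat) : Prop :=
  exists m n : int, [/\ allowable m n, cval m n = c &
    [\/ a = `|t1 m n|%N, a = `|t2 m n|%N | a = `|t3 m n|%N]].

Definition equinumerous (A B : Type) : Prop :=
  exists f : A -> B, bijective f.

From HB Require Import structures.
From mathcomp Require Import all_boot all_order all_algebra.
From mathcomp Require Import ring lra.
From Stdlib Require Import ProofIrrelevance ClassicalEpsilon.
Import Order.TTheory GRing.Theory Num.Theory.
Set Implicit Arguments.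
Unset Strict Implicit.
Local Open Scope ring_scope.

(* Send an allowable pair (m,n) with t1(m,n) = a to the value
   c(m,n); its c-triangle has the vertex |t1(m,n)| = a.
   - Surjectivity: the substitutions (m,n) -> (-m,-n) and
     (m,n) -> (-(m+n), m) preserve allowability and c, change the sign of
     t1, resp. send t1 to t2 and then to -t3.  Hence any vertex |t_i| of a
     c-triangle can be moved to the first coordinate with t1 = a.
   - Injectivity: with E = mn(m+n), c = -A/(4E^2) and gcd(A,E) = 1, so c
     determines A and E^2.  The numerators satisfy t1^2 - A = 2E t2,
     t2^2 - A = -2E t3, t3^2 - A = 2E t1 (the 3-cycle of x^2 + c), so t1 != 0
     together with A and E^2 determines E, t2 and t3; finally the triple
     (t1,t2,t3) determines (m,n) since t2 + t3 = 2mQ, t1 - t2 = 2nQ with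
     Q = m^2 + mn + n^2 > 0.
   The file first proves the algebraic facts behind injectivity (the form Q,
   uniqueness of square cycles, the coprimality of A and E), then the
   symmetries behind surjectivity, and concludes since an injective and
   surjective map yields equinumerosity (its inverse is obtained by choice). *)

Definition normQ (R : pzRingType) (m n : R) : R := m ^+ 2 + m * n + n ^+ 2.

Lemma normQ_gt0 (R : realDomainType) (m n : R) : m != 0 -> 0 < normQ m n.
Proof.
(* 4Q(m,n) = 3m^2 + (m + 2n)^2 *)
move=> m0; have m_sqr_gt0 : 0 < m ^+ 2 by rewrite lt0r sqr_ge0 sqrf_eq0 m0.
have square_ge0 : 0 <= (m + 2 * n) ^+ 2 by rewrite sqr_ge0.
rewrite /normQ; nra.
Qed.

(* Cubing is injective on an ordered domain, since x^3 - y^3 = (x-y)Q(x,y). *)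
Lemma cube_inj (R : realDomainType) (x y : R) : x ^+ 3 = y ^+ 3 -> x = y.
Proof.
move=> e; have [x0|x0] := eqVneq x 0.
  by move/eqP: e; rewrite x0 expr0n eq_sym expf_eq0 => /eqP.
have : (x - y) * normQ x y == 0.
  have -> : (x - y) * normQ x y = x ^+ 3 - y ^+ 3 by rewrite /normQ; ring.
  by rewrite e subrr.
by rewrite mulf_eq0 (gt_eqF (normQ_gt0 y x0)) orbF subr_eq0 => /eqP.
Qed.

(* A pair (m,n) with m != 0 is determined by the two values mQ(m,n), nQ(m,n):
   they fix the ratio n/m, then m^3, hence m. *)
Lemma normQ_scaled_inj (R : realDomainType) (m n m' n' : R) :
  m != 0 -> m' != 0 ->
  m * normQ m n = m' * normQ m' n' -> n * normQ m n = n' * normQ m' n' ->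
  m = m' /\ n = n'.
Proof.
move=> m0 m0' em en.
have Q0 := lt0r_neq0 (normQ_gt0 n m0); have Q0' := lt0r_neq0 (normQ_gt0 n' m0').
have cross : m * n' = m' * n.
  apply: (mulIf (mulf_neq0 Q0 Q0')).
  by rewrite mulrACA em -en; ring.
have sqr_cross : m ^+ 2 * normQ m' n' = m' ^+ 2 * normQ m n.
  have -> : m ^+ 2 * normQ m' n' = m ^+ 2 * m' ^+ 2 + m * m' * (m * n') + (m * n') ^+ 2
    by rewrite /normQ; ring.
  by rewrite cross /normQ; ring.
have cube : m ^+ 3 = m' ^+ 3.
  apply: (mulIf Q0); rewrite exprSr -mulrA em mulrCA sqr_cross; ring.
have mm' := cube_inj cube; subst m'; split=> //.
by apply: (mulfI m0); rewrite cross mulrC.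
Qed.

(* The numerators of the 3-cycle determine the allowable pair:
   t2 + t3 = 2mQ(m,n) and t1 - t2 = 2nQ(m,n). *)
Lemma t_triple_inj (m n m' n' : int) : m != 0 -> m' != 0 ->
  t1 m n = t1 m' n' -> t2 m n = t2 m' n' -> t3 m n = t3 m' n' ->
  m = m' /\ n = n'.
Proof.
have sum23 x y : t2 x y + t3 x y = 2 * (x * normQ x y).
  by rewrite /t2 /t3 /normQ; ring.
have diff12 x y : t1 x y - t2 x y = 2 * (y * normQ x y).
  by rewrite /t1 /t2 /normQ; ring.
move=> m0 m0' e1 e2 e3; apply: normQ_scaled_inj => //; apply: (@mulfI _ 2) => //.
  by rewrite -!sum23 e2 e3.
by rewrite -!diff12 e1 e2.
Qed.

(* [square_cycle A D u1 u2 u3]: with c = -A/D^2, the numbers u1/D, u2/D, -u3/D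
   form a cycle of x |-> x^2 + c. *)
Definition square_cycle (R : comPzRingType) (A D u1 u2 u3 : R) : Prop :=
  [/\ u1 ^+ 2 - A = u2 * D, u2 ^+ 2 - A = - (u3 * D) & u3 ^+ 2 - A = u1 * D].

Lemma sqr_eq_of_scaled (R : idomainType) (D D' x y : R) :
  D ^+ 2 = D' ^+ 2 -> D != 0 -> x * D = y * D' -> x ^+ 2 = y ^+ 2.
Proof.
move=> DD D0 e; apply: (mulIf (expf_neq0 2 D0)).
by rewrite {2}DD -!exprMn e.
Qed.

(* Knowing one nonzero element, A and D^2, a square cycle is determined:
   the relation u_i D = v_i D' propagates around the cycle and returns to
   u1 D = u1 D', which forces D = D'. *)
Lemma square_cycle_unique (R : idomainType) (A D D' u1 u2 u3 v1 v2 v3 : R) :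
  square_cycle A D u1 u2 u3 -> square_cycle A D' v1 v2 v3 ->
  D ^+ 2 = D' ^+ 2 -> D != 0 -> u1 != 0 -> u1 = v1 ->
  [/\ D = D', u2 = v2 & u3 = v3].
Proof.
case=> hu1 hu2 hu3 [hv1 hv2 hv3] DD D0 u0 e1.
have s2 : u2 * D = v2 * D' by rewrite -hu1 -hv1 e1.
have s3 : u3 * D = v3 * D'.
  by apply: oppr_inj; rewrite -hu2 -hv2 (sqr_eq_of_scaled DD D0 s2).
have s1 : u1 * D = v1 * D' by rewrite -hu3 -hv3 (sqr_eq_of_scaled DD D0 s3).
have eD : D = D' by apply: (mulfI u0); rewrite s1 e1.
by subst D'; split=> //; apply: (mulIf D0).
Qed.

(* E(m,n) = mn(m+n): B = 4E^2, and allowability includes E != 0. *)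
Definition Epoly (m n : int) : int := m * n * (m + n).

Lemma t_square_cycle (m n : int) :
  square_cycle (Apoly m n) (2 * Epoly m n) (t1 m n) (t2 m n) (t3 m n).
Proof. by split; rewrite /t1 /t2 /t3 /Apoly /Epoly; ring. Qed.

(* gcd(A, mn(m+n)) = 1 for an allowable pair: modulo m, n and m + n the
   value A(m,n) reduces to n^6, m^6 and m^6 respectively. *)
Lemma coprime_A_E (m n : int) : allowable m n -> coprimez (Apoly m n) (Epoly m n).
Proof.
case=> gmn _; have cmn : coprimez m n by rewrite /coprimez gmn.
have reduce d r q : Apoly m n = q * d + r ^+ 6 -> coprimez d r ->
    coprimez (Apoly m n) d.
  by move=> -> cdr; rewrite coprimez_sym /coprimez gcdzMDl; apply: coprimezXr.
rewrite /Epoly !coprimezMr -andbA; apply/and3P; split.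
- apply: (reduce _ n (m ^+ 5 + 2 * m ^+ 4 * n + 4 * m ^+ 3 * n ^+ 2
    + 8 * m ^+ 2 * n ^+ 3 + 9 * m * n ^+ 4 + 4 * n ^+ 5)) => //.
  by rewrite /Apoly; ring.
- apply: (reduce _ m (2 * m ^+ 5 + 4 * m ^+ 4 * n + 8 * m ^+ 3 * n ^+ 2
    + 9 * m ^+ 2 * n ^+ 3 + 4 * m * n ^+ 4 + n ^+ 5)); last by rewrite coprimez_sym.
  by rewrite /Apoly; ring.
- apply: (reduce _ m (n ^+ 5 + 3 * m * n ^+ 4 + 6 * m ^+ 2 * n ^+ 3
    + 2 * m ^+ 3 * n ^+ 2 + 2 * m ^+ 4 * n)).
    by rewrite /Apoly; ring.
  by rewrite coprimez_sym /coprimez gcdzDl.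
Qed.

Lemma reduced_fraction_inj (x y x' y' : int) : 0 < y -> 0 < y' ->
  coprimez x y -> coprimez x' y' -> x%:~R / y%:~R = x'%:~R / y'%:~R :> rat ->
  x = x' /\ y = y'.
Proof.
rewrite !coprimezE => y0 y0' cxy cxy' e; split.
  by have := congr1 numq e; rewrite !coprimeq_num // !gtr0_sg // !mul1r.
by have := congr1 denq e; rewrite !coprimeq_den // !gt_eqF // !gtr0_norm.
Qed.

(* c = -A/(4E^2) with A coprime to E, so c determines A and E^2. *)
Lemma cval_inj_data (m n m' n' : int) : allowable m n -> allowable m' n' ->
  cval m n = cval m' n' ->
  Apoly m n = Apoly m' n' /\ Epoly m n ^+ 2 = Epoly m' n' ^+ 2.
Proof.
have cvalE x y : cval x y = - ((Apoly x y)%:~R / (Epoly x y ^+ 2)%:~R / 4).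
  rewrite /cval.
  have -> : Bpoly x y = 4 * Epoly x y ^+ 2 by rewrite /Bpoly /Epoly; ring.
  by rewrite intrM invfM mulrA mulrAC.
have Esqr_gt0 x y : allowable x y -> 0 < Epoly x y ^+ 2.
  by case=> _ E0; rewrite lt0r sqrf_eq0 E0 sqr_ge0.
have coprime_sqr x y : allowable x y -> coprimez (Apoly x y) (Epoly x y ^+ 2).
  by move=> hxy; apply/coprimezXr/coprime_A_E.
move=> hmn hmn'; rewrite !cvalE => /oppr_inj /(congr1 ( *%R^~ 4)).
rewrite !divfK // => e.
by apply: reduced_fraction_inj; rewrite ?Esqr_gt0 ?coprime_sqr.
Qed.

Lemma allowable_pair_inj (m n m' n' : int) : allowable m n -> allowable m' n' ->
  cval m n = cval m' n' -> t1 m n = t1 m' n' -> t1 m n != 0 -> m = m' /\ n = n'.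
Proof.
move=> hmn hmn' hc e1 t0.
have m_neq0 x y : allowable x y -> x != 0.
  by case=> _; apply: contraNneq => ->; rewrite !mul0r.
have [eA eE] := cval_inj_data hmn hmn' hc.
have cyc' := t_square_cycle m' n'; rewrite -eA in cyc'.
have D0 : 2 * Epoly m n != 0 by rewrite mulf_neq0 //; case: hmn.
have DD : (2 * Epoly m n) ^+ 2 = (2 * Epoly m' n') ^+ 2 by rewrite exprMn eE -exprMn.
have [_ e2 e3] := square_cycle_unique (t_square_cycle m n) cyc' DD D0 t0 e1.
exact: t_triple_inj (m_neq0 _ _ hmn) (m_neq0 _ _ hmn') e1 e2 e3.
Qed.

Lemma allowable_neg (m n : int) : allowable m n -> allowable (- m) (- n).
Proof.
case=> g E0; split; first by rewrite gcdNz gcdzN.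
by rewrite -opprD !mulrNN mulrN oppr_eq0.
Qed.

Lemma allowable_rot (m n : int) : allowable m n -> allowable (- (m + n)) m.
Proof.
case=> g E0; split; first by rewrite gcdNz gcdzC gcdzDl.
by have -> : - (m + n) * m * (- (m + n) + m) = m * n * (m + n) by ring.
Qed.

Lemma cval_neg (m n : int) : cval (- m) (- n) = cval m n.
Proof. by rewrite /cval /Apoly /Bpoly; congr (- (_%:~R / _%:~R)); ring. Qed.

Lemma cval_rot (m n : int) : cval (- (m + n)) m = cval m n.
Proof. by rewrite /cval /Apoly /Bpoly; congr (- (_%:~R / _%:~R)); ring. Qed.

Lemma t1_neg (m n : int) : t1 (- m) (- n) = - t1 m n.
Proof. by rewrite /t1; ring. Qed.

Lemma t1_rot (m n : int) : t1 (- (m + n)) m = t2 m n.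
Proof. by rewrite /t1 /t2; ring. Qed.

Lemma t2_rot (m n : int) : t2 (- (m + n)) m = - t3 m n.
Proof. by rewrite /t2 /t3; ring. Qed.

Lemma t1_abs_realised (m n : int) : allowable m n ->
  exists m' n', [/\ allowable m' n', cval m' n' = cval m n
                  & t1 m' n' = (`|t1 m n|%N)%:Z].
Proof.
move=> hmn; rewrite abszE; have [t_ge0|t_lt0] := lerP 0 (t1 m n).
  by exists m, n; rewrite ger0_norm.
exists (- m), (- n); split; first exact: allowable_neg.
  exact: cval_neg.
by rewrite ltr0_norm // t1_neg.
Qed.

Lemma vertex_realised_by_t1 (m n : int) (a : nat) : allowable m n ->
  [\/ a = `|t1 m n|%N, a = `|t2 m n|%N | a = `|t3 m n|%N] ->
  exists m' n', [/\ allowable m' n', cval m' n' = cval m n & t1 m' n' = a%:Z].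
Proof.
move=> hmn; have hrot := allowable_rot hmn; have hrot2 := allowable_rot hrot.
case=> ->.
- exact: t1_abs_realised hmn.
- by rewrite -t1_rot -(cval_rot m n); apply: t1_abs_realised hrot.
- rewrite -abszN -t2_rot -t1_rot -(cval_rot m n) -cval_rot.
  exact: t1_abs_realised hrot2.
Qed.

Lemma equinumerous_of_inj_surj (A B : Type) (g : B -> A) :
  injective g -> (forall x, exists y, g y = x) -> equinumerous A B.
Proof.
move=> g_inj g_surj.
pose f x := proj1_sig (constructive_indefinite_description _ (g_surj x)).
have fK : cancel f g.
  by move=> x; rewrite /f; case: constructive_indefinite_description.
by exists f, g => // y; apply: g_inj; rewrite fK.
Qed.

Theorem theorem10 (a : nat) (ha : (0 < a)%N) :
  equinumerous {c : rat | c_triangle_has_vertex c a}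
               {p : int * int | allowable p.1 p.2 /\ t1 p.1 p.2 = a%:Z}.
Proof.
have sig_eq (T : Type) (P : T -> Prop) (u v : {x | P x}) : sval u = sval v -> u = v.
  by apply: eq_sig_hprop => x; apply: proof_irrelevance.
have pair_vertex (p : {p : int * int | allowable p.1 p.2 /\ t1 p.1 p.2 = a%:Z}) :
    c_triangle_has_vertex (cval (sval p).1 (sval p).2) a.
  case: p => [[m n] /= [hmn t1a]]; exists m, n; split=> //.
  by apply: Or31; rewrite t1a.
apply: (equinumerous_of_inj_surj
         (g := fun p => exist (fun c => c_triangle_has_vertex c a) _ (pair_vertex p))).
- move=> [[m n] /= [hmn t1a]] [[m' n'] /= [hmn' t1a']] /(congr1 sval) /= hc.
  have t0 : t1 m n != 0 by rewrite t1a -lt0n.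
  have [em en] := allowable_pair_inj hmn hmn' hc (etrans t1a (esym t1a')) t0.
  by apply: sig_eq; rewrite /= em en.
- move=> [c [m [n [hmn hc vertex]]]].
  have [m' [n' [hmn' hc' t1a]]] := vertex_realised_by_t1 hmn vertex.
  by exists (exist _ (m', n') (conj hmn' t1a)); apply: sig_eq; rewrite /= hc' hc.
Qed.
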